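(* Let ${\bf T}$ be a string of length $N$ over an integer alphabet whose last character ${\bf T}[N]$ is strictly smaller than every other character of ${\bf T}$, and set ${\bf T}[N+1]$ to be a symbol different from all characters of ${\bf T}$. Let $2\le i\le N$ and $t={\bf T}[i]$, and suppose that $\mathrm{suf}(i)$ is either the lexicographically largest L-suffix among all L-suffixes starting with character $t$, or the lexicographically smallest LMS-suffix among all LMS-suffixes starting with character $t$. Then ${\bf T}[i-1]\neq t$. Moreover, with $j=\lfloor i/2\rfloor$, the position $i$ is determined by $j$ and $t$ as follows: if ${\bf T}[2j]\neq {\bf T}[2j+1]$ then $i$ is the unique element of $\{2j,2j+1\}$ with ${\bf T}[i]=t$; otherwise $i=2j$.
   Context: For $1\le i\le N$, $\mathrm{suf}(i)={\bf T}[i\dots N]$. The suffix $\mathrm{suf}(i)$ is an S-suffix if $i=N$ or $\mathrm{suf}(i)$ is lexicographically smaller than $\mathrm{suf}(i+1)$; otherwise it is an L-suffix. An S-suffix $\mathrm{suf}(i)$ is an LMS-suffix if $i>1$ and $\mathrm{suf}(i-1)$ is an L-suffix. *)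

(* Strings are seq nat (integer alphabet), positions 1-indexed. *)
From mathcomp Require Import all_boot.
Set Implicit Arguments. Unset Strict Implicit. Unset Printing Implicit Defensive.

Fixpoint lex_lt (s t : seq nat) : bool :=
  match s, t with
  | [::], [::] => false
  | [::], _ :: _ => true
  | _ :: _, [::] => false
  | x :: s', y :: t' => (x < y) || ((x == y) && lex_lt s' t')
  end.

Definition chr (T : seq nat) (i : nat) : nat := nth 0 T i.-1.

Definition chrx (T : seq nat) (c : nat) (i : nat) : nat :=
  if i == (size T).+1 then c else chr T i.

Definition suf (T : seq nat) (i : nat) : seq nat := drop i.-1 T.

Definition is_S (T : seq nat) (i : nat) : bool :=
  (i == size T) || lex_lt (suf T i) (suf T i.+1).
Definition is_L (T : seq nat) (i : nat) : bool := ~~ is_S T i.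
Definition is_LMS (T : seq nat) (i : nat) : bool :=
  [&& is_S T i, 1 < i & is_L T i.-1].

From mathcomp Require Import all_boot zify.

Set Implicit Arguments.
Unset Strict Implicit.
Unset Printing Implicit Defensive.

(* If T[i-1] = T[i] = t then suf(i-1) = t suf(i) has the same type as suf(i)
   (for i < N) and is its neighbour among the suffixes starting with t:
   an L-suffix suf(i-1) would exceed suf(i), contradicting maximality, and
   for an LMS-suffix suf(i) the predecessor would have to be an S-suffix.
   The case i = N is excluded by the uniqueness of the sentinel T[N].
   Since i is 2j or 2j+1, a character run across {2j, 2j+1} forces i = 2j. *)

Lemma suf_cons T k : 1 <= k <= size T -> suf T k = chr T k :: suf T k.+1.
Proof. by case: k => [//|k] /andP[_ lt_kT]; rewrite /suf /chr /= (drop_nth 0). Qed.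

Lemma size_suf T k : size (suf T k) = size T - k.-1.
Proof. exact: size_drop. Qed.

Lemma lex_lt_cons x s t : lex_lt (x :: s) (x :: t) = lex_lt s t.
Proof. by rewrite /= ltnn eqxx. Qed.

Lemma lex_lt_total (s t : seq nat) : s != t -> lex_lt s t || lex_lt t s.
Proof.
elim: s t => [|x s IH] [|y t] //=.
by case: (ltngtP x y) => //= <- ne; apply: IH; apply: contra ne => /eqP ->.
Qed.

Lemma is_L_suf_gt T k :
  0 < k < size T -> is_L T k -> lex_lt (suf T k.+1) (suf T k).
Proof.
move=> /andP[k_gt0 lt_kT]; rewrite /is_L /is_S negb_or => /andP[_ not_lt].
have neq : suf T k.+1 != suf T k.
  by apply/eqP => /(congr1 size); rewrite !size_suf; case: k k_gt0 lt_kT {not_lt} => [|k] //=; lia.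
by have := lex_lt_total neq; rewrite (negbTE not_lt) orbF.
Qed.

Lemma is_S_run T k :
  0 < k -> k.+1 < size T -> chr T k = chr T k.+1 -> is_S T k = is_S T k.+1.
Proof.
move=> k_gt0 lt_kT eq_chr; have le_kT := ltnW lt_kT.
rewrite /is_S !ltn_eqF //= (@suf_cons T k) ?k_gt0 ?(ltnW le_kT) //.
by rewrite (@suf_cons T k.+1) // eq_chr lex_lt_cons.
Qed.

Lemma max_L_chr_pred_neq T i :
  1 < i <= size T -> is_L T i ->
  (forall k, 1 <= k <= size T -> is_L T k -> chr T k = chr T i ->
     ~~ lex_lt (suf T i) (suf T k)) ->
  chr T i.-1 != chr T i.
Proof.
case: i => [|[|k]] //= le_iT L_i max_i; apply/eqP => eq_chr.
have lt_iT : k.+2 < size T.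
  move: L_i; rewrite /is_L /is_S negb_or => /andP[neq_iT _].
  by rewrite ltn_neqAle neq_iT le_iT.
have L_k : is_L T k.+1 by rewrite /is_L is_S_run.
have /negP := max_i k.+1 (ltnW (ltnW lt_iT)) L_k eq_chr; apply.
by apply: is_L_suf_gt => //=; apply: ltnW.
Qed.

Lemma LMS_chr_pred_neq T i :
  (forall k, 1 <= k < size T -> chr T (size T) < chr T k) ->
  i <= size T -> is_LMS T i -> chr T i.-1 != chr T i.
Proof.
move=> last_min le_iT /and3P[S_i]; case: i le_iT S_i => [|[|k]] //= le_iT S_i _ L_k.
apply/eqP => eq_chr; case: (ltngtP k.+2 (size T)) le_iT => // [lt_iT | eq_iT] _.
  by move: L_k; rewrite /is_L is_S_run // S_i.
by have := last_min k.+1; rewrite -eq_iT eq_chr ltnn /= => /(_ (ltnSn _)).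
Qed.

Lemma pos_from_half (A : eqType) (f : nat -> A) i :
  f i.-1 != f i ->
  let j := i./2 in
  if f j.*2 != f j.*2.+1 then
    i \in [:: j.*2; j.*2.+1] /\
    forall k, k \in [:: j.*2; j.*2.+1] -> f k = f i -> k = i
  else i = j.*2.
Proof.
move=> neq_pred /=; have := odd_double_half i.
case: (odd i); rewrite ?add1n ?add0n; move: (i./2) => j i_eq; subst i.
all: case: ifP => [/negP neq_half | /negbFE /eqP eq_half].
- rewrite !inE eqxx orbT; split=> // k; rewrite !inE => /orP[] /eqP -> // eq_fk.
  by case: neq_half; rewrite eq_fk.
- by case/negP: neq_pred; rewrite eq_half.
- rewrite !inE eqxx; split=> // k; rewrite !inE => /orP[] /eqP -> // eq_fk.
  by case: neq_half; rewrite -eq_fk.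
- by [].
Qed.

Theorem mainTheorem4 (T : seq nat) (c : nat) (i : nat) :
  (forall k, 1 <= k < size T -> chr T (size T) < chr T k) ->
  c \notin T ->
  2 <= i <= size T ->
  ((is_L T i /\
     forall k, 1 <= k <= size T -> is_L T k -> chr T k = chr T i ->
       ~~ lex_lt (suf T i) (suf T k))
   \/
   (is_LMS T i /\
     forall k, 1 <= k <= size T -> is_LMS T k -> chr T k = chr T i ->
       ~~ lex_lt (suf T k) (suf T i))) ->
  chr T i.-1 != chr T i /\
  (let j := i./2 in
   if chrx T c j.*2 != chrx T c j.*2.+1 then
     [/\ i \in [:: j.*2; j.*2.+1], chrx T c i = chr T i &
         forall k, k \in [:: j.*2; j.*2.+1] -> chrx T c k = chr T i -> k = i]
   else i = j.*2).
Proof.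
move=> last_min _ i_range extremal; have /andP[_ le_iT] := i_range.
have neq_pred : chr T i.-1 != chr T i.
  case: extremal => [[L_i max_i] | [LMS_i _]].
  - exact: max_L_chr_pred_neq.
  - exact: LMS_chr_pred_neq.
have chrxE k : k <= size T -> chrx T c k = chr T k.
  by move=> le_kT; rewrite /chrx ltn_eqF.
split=> //=; rewrite -(chrxE i) //.
have neq_predx : chrx T c i.-1 != chrx T c i.
  by rewrite !chrxE // (leq_trans (leq_pred i)).
have /= := pos_from_half neq_predx.
by case: ifP => // _ [mem_i uniq_i].
Qed.
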